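(* Let $n\ge 4$ and $t\in[n-1]$ be integers, and let $S$ be a weak $(2n-2t)$-resolving set of $K_n\times K_n$, with $\overline{S}=V\setminus S$. For all distinct $i,i'\in[n]$: if there is some $j\in[n]$ with $(i,j)\in\overline S$ and $(i',j)\in\overline S$, then $|(L_i\cup L_{i'})\cap\overline S|\le 2t$; otherwise $|(L_i\cup L_{i'})\cap\overline S|\le 2t+1$.
   Context: $K_n\times K_n$ is the direct product of two complete graphs on $n$ vertices: vertex set $V=[n]\times[n]$ with $[n]=\{1,\dots,n\}$, and $(i,j)$ adjacent to $(i',j')$ iff $i\ne i'$ and $j\ne j'$. For $i\in[n]$, $L_i=\{(i,j):j\in[n]\}$ is a vertical layer. For vertices $x,y,z$ and $S\subseteq V$, $\Delta_z(x,y)=|d(x,z)-d(y,z)|$ (with $d$ the graph distance) and $\Delta_S(x,y)=\sum_{z\in S}\Delta_z(x,y)$. A set $S$ is a weak $k$-resolving set if $\Delta_S(x,y)\ge k$ for all distinct $x,y\in V$. *)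

(* Vertices of K_n x K_n are pairs in 'I_n * 'I_n
   (0-based indexing of [n]). *)
From mathcomp Require Import all_boot.
Set Implicit Arguments. Unset Strict Implicit. Unset Printing Implicit Defensive.

Section KnKn.
Variable n : nat.
Definition vtx := ('I_n * 'I_n)%type.

Definition adj (x y : vtx) : bool := (x.1 != y.1) && (x.2 != y.2).

Fixpoint reach (k : nat) (x : vtx) : {set vtx} :=
  match k with
  | 0 => [set x]
  | k'.+1 => reach k' x :|: [set y | [exists z in reach k' x, adj z y]]
  end.

(* graph distance: least k with y reachable within k steps
   (returns #|[set: vtx]| if unreachable, which never happens for n >= 3) *)
Definition dist (x y : vtx) : nat :=
  find (fun k => y \in reach k x) (iota 0 #|[set: vtx]|).

Definition Delta (z x y : vtx) : nat :=
  (dist x z - dist y z) + (dist y z - dist x z).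

Definition DeltaS (S : {set vtx}) (x y : vtx) : nat :=
  \sum_(z in S) Delta z x y.

Definition weak_resolving (k : nat) (S : {set vtx}) : Prop :=
  forall x y : vtx, x != y -> k <= DeltaS S x y.

Definition layer (i : 'I_n) : {set vtx} := [set x : vtx | x.1 == i].
End KnKn.

(* For n >= 3 the graph K_n x K_n has diameter 2. Two vertices x = (i,j) and
   y = (i',j) of one column are non-adjacent, and every z outside L_i ∪ L_i'
   is equidistant from them; hence Delta_z(x,y) vanishes off L_i ∪ L_i', is at
   most 1 on it, and exceeds 1 only at z = x or z = y. Summing over S, the
   resolving condition gives
     |(L_i ∪ L_i') \ S| <= 2t + [x ∈ S] + [y ∈ S].
   A column j in which both x and y avoid S yields 2t; otherwise the column of
   any vertex of (L_i ∪ L_i') \ S yields 2t + 1. *)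

From mathcomp Require Import all_boot zify.
Set Implicit Arguments. Unset Strict Implicit. Unset Printing Implicit Defensive.

Lemma exists_neq2 (T : finType) (a b : T) : 2 < #|T| -> exists c, (c != a) && (c != b).
Proof.
move=> T3; have /set0Pn[c] : ~: [set a; b] != set0.
  by have := cardsC [set a; b]; rewrite -card_gt0 cards2; lia.
by rewrite !inE negb_or; exists c.
Qed.

Lemma sum_mem_card (T : finType) (S A : {set T}) :
  \sum_(z in S) (z \in A : nat) = #|S :&: A|.
Proof.
rewrite -sum1_card big_mkcond [RHS]big_mkcond; apply: eq_bigr => z _.
by rewrite inE; case: (z \in S); case: (z \in A).
Qed.

Lemma sum_pred1_mem (T : finType) (S : {set T}) (x : T) :
  \sum_(z in S) (z == x : nat) = (x \in S).
Proof.
rewrite big_mkcond (bigD1 x) //= eqxx big1 => [|z /negPf->]; last by case: (z \in S).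
by rewrite addn0; case: (x \in S).
Qed.

Section KnKn.
Variable n : nat.
Implicit Types (x y z : vtx n) (i j : 'I_n).

Lemma mem_reach1 x y : (y \in reach 1 x) = (y == x) || adj x y.
Proof.
rewrite /= !inE; congr (_ || _); apply/existsP/idP => [[z /andP[]]|xy].
  by rewrite inE => /eqP->.
by exists x; rewrite inE eqxx.
Qed.

Lemma card_layerU i (i' : 'I_n) : i != i' -> #|layer i :|: layer i'| = 2 * n.
Proof.
move=> ii'; have -> : layer i :|: layer i' = setX [set i; i'] [set: 'I_n].
  by apply/setP => -[a b]; rewrite !inE andbT.
by rewrite cardsX cards2 ii' cardsT card_ord.
Qed.

Hypothesis n_gt2 : 2 < n.

Lemma mem_reach2 x y : y \in reach 2 x.
Proof.
have n3 : 2 < #|'I_n| by rewrite card_ord.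
have [c /andP[c1 c2]] := exists_neq2 x.1 y.1 n3.
have [d /andP[d1 d2]] := exists_neq2 x.2 y.2 n3.
rewrite [reach 2 x]/= !inE -/(reach 1 x).
apply/orP; right; apply/existsP; exists (c, d).
by rewrite mem_reach1 /adj /= c2 d2 (eq_sym x.1) c1 (eq_sym x.2) d1 orbT.
Qed.

Lemma distE x y : dist x y = if x == y then 0 else if adj x y then 1 else 2.
Proof.
have N3 : 3 <= #|[set: vtx n]|.
  by rewrite cardsT card_prod card_ord; nia.
rewrite /dist -(subnKC N3) iotaD /= mem_reach1 mem_reach2 inE (eq_sym y).
by case: (x == y) => //; case: (adj x y).
Qed.

Lemma Delta_column_le z i (i' : 'I_n) j : i != i' ->
  Delta z (i, j) (i', j) <=
    (z \in layer i :|: layer i') + (z == (i, j)) + (z == (i', j)).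
Proof.
move=> ii'; case: z => a b.
rewrite /Delta !distE /adj !inE /= !xpair_eqE !(eq_sym _ a) (eq_sym j b).
case: (a =P i) => [->|_]; first rewrite (negPf ii');
  by case: (a == i'); case: (b == j).
Qed.

Lemma DeltaS_column_le S i (i' : 'I_n) j : i != i' ->
  DeltaS S (i, j) (i', j) <=
    #|S :&: (layer i :|: layer i')| + ((i, j) \in S) + ((i', j) \in S).
Proof.
move=> ii'; rewrite /DeltaS -sum_mem_card -!sum_pred1_mem -!big_split.
by apply: leq_sum => z _; apply: Delta_column_le.
Qed.

Lemma weak_resolving_card_layerU_setC k S i (i' : 'I_n) j :
  weak_resolving k S -> i != i' ->
  k + #|(layer i :|: layer i') :&: ~: S| <= 2 * n + ((i, j) \in S) + ((i', j) \in S).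
Proof.
move=> resS ii'.
have xy : (i, j) != (i', j) by rewrite xpair_eqE negb_and ii'.
have := resS _ _ xy.
have := DeltaS_column_le S j ii'.
have := cardsID S (layer i :|: layer i'); rewrite setDE setIC card_layerU //.
lia.
Qed.
End KnKn.

Theorem mainTheorem7 (n t : nat) (S : {set vtx n}) :
  4 <= n -> 1 <= t <= n - 1 ->
  weak_resolving (2 * n - 2 * t) S ->
  forall i i' : 'I_n, i != i' ->
    if [exists j : 'I_n, ((i, j) \in ~: S) && ((i', j) \in ~: S)]
    then #|(layer i :|: layer i') :&: ~: S| <= 2 * t
    else #|(layer i :|: layer i') :&: ~: S| <= 2 * t + 1.
Proof.
move=> /ltnW n_gt2 _ resS i i' ii'.
have bound j := weak_resolving_card_layerU_setC n_gt2 j resS ii'.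
case: existsP => [[j /andP[]]|_].
  by rewrite !in_setC => /negPf ij /negPf i'j; have := bound j; rewrite ij i'j; lia.
case: (set_0Vmem ((layer i :|: layer i') :&: ~: S)) => [->|[[a j] aL]].
  by rewrite cards0.
rewrite !inE /= in aL; case/andP: aL => /orP[]/eqP-> /negPf aj;
  by have := bound j; rewrite aj; lia.
Qed.
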